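(* Let $R$ be a separative exchange ring in which $2$ is invertible, and let $a\in R$ be such that $a-a^3$ is regular. If $(a-a^3)R\propto r(a)$ and $(a-a^3)R\propto R/aR$, then $a$ is unit-regular.
   Context: All rings are associative with identity; modules are right modules. An element $x\in R$ is regular if $x=xyx$ for some $y\in R$, and unit-regular if $x=xux$ for some unit $u\in R$. $R$ is an exchange ring if for every $x\in R$ there is an idempotent $e\in xR$ with $1-e\in(1-x)R$. $R$ is separative if for all finitely generated projective right $R$-modules $A,B$: $A\oplus A\cong A\oplus B\cong B\oplus B$ implies $A\cong B$. $r(a)=\{x\in R: ax=0\}$. For right modules $A,B$, $A\propto B$ means that $A$ is isomorphic to a direct summand of $B^{\oplus m}$ (direct sum of $m$ copies of $B$) for some positive integer $m$. *)

From HB Require Import structures.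
From mathcomp Require Import all_boot all_algebra.
Set Implicit Arguments. Unset Strict Implicit. Unset Printing Implicit Defensive.
Import GRing.Theory.
Local Open Scope ring_scope.

(* A right R-module: carrier with an equivalence relation (its equality),
   compatible operations, and the module axioms holding up to that equality. *)
Record rmod (R : pzRingType) := RMod {
  mcar :> Type;
  meq : mcar -> mcar -> Prop;
  mzero : mcar;
  madd : mcar -> mcar -> mcar;
  mopp : mcar -> mcar;
  mact : mcar -> R -> mcar;
  meq_refl : forall x, meq x x;
  meq_sym : forall x y, meq x y -> meq y x;
  meq_trans : forall x y z, meq x y -> meq y z -> meq x z;
  madd_compat : forall x x' y y', meq x x' -> meq y y' -> meq (madd x y) (madd x' y');
  mopp_compat : forall x x', meq x x' -> meq (mopp x) (mopp x');
  mact_compat : forall x x' r, meq x x' -> meq (mact x r) (mact x' r);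
  maddA : forall x y z, meq (madd x (madd y z)) (madd (madd x y) z);
  maddC : forall x y, meq (madd x y) (madd y x);
  madd0 : forall x, meq (madd x mzero) x;
  maddN : forall x, meq (madd x (mopp x)) mzero;
  mactDl : forall x y r, meq (mact (madd x y) r) (madd (mact x r) (mact y r));
  mactDr : forall x r s, meq (mact x (r + s)) (madd (mact x r) (mact x s));
  mactM : forall x r s, meq (mact x (r * s)) (mact (mact x r) s);
  mact1 : forall x, meq (mact x 1) x }.

Arguments meq {R M} : rename.
Arguments mzero {R M} : rename.
Arguments madd {R M} : rename.
Arguments mopp {R M} : rename.
Arguments mact {R M} : rename.

Definition is_hom (R : pzRingType) (A B : rmod R) (f : A -> B) : Prop :=
  [/\ (forall x y, meq x y -> meq (f x) (f y)),
      (forall x y, meq (f (madd x y)) (madd (f x) (f y))) &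
      (forall x r, meq (f (mact x r)) (mact (f x) r))].

Definition miso (R : pzRingType) (A B : rmod R) : Prop :=
  exists (f : A -> B) (g : B -> A),
    [/\ is_hom f, is_hom g, (forall x, meq (g (f x)) x) & (forall y, meq (f (g y)) y)].

Definition dsum (R : pzRingType) (A B : rmod R) : rmod R.
Proof.
refine (@RMod R (A * B)%type
  (fun p q => meq p.1 q.1 /\ meq p.2 q.2)
  (mzero, mzero)
  (fun p q => (madd p.1 q.1, madd p.2 q.2))
  (fun p => (mopp p.1, mopp p.2))
  (fun p r => (mact p.1 r, mact p.2 r)) _ _ _ _ _ _ _ _ _ _ _ _ _ _).
- by move=> x; split; apply: meq_refl.
- by move=> x y [? ?]; split; apply: meq_sym.
- by move=> x y z [? ?] [? ?]; split; apply: meq_trans; eauto.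
- by move=> x x' y y' [? ?] [? ?]; split; apply: madd_compat.
- by move=> x x' [? ?]; split; apply: mopp_compat.
- by move=> x x' r [? ?]; split; apply: mact_compat.
- by move=> x y z; split; apply: maddA.
- by move=> x y; split; apply: maddC.
- by move=> x; split; apply: madd0.
- by move=> x; split; apply: maddN.
- by move=> x y r; split; apply: mactDl.
- by move=> x r s; split; apply: mactDr.
- by move=> x r s; split; apply: mactM.
- by move=> x; split; apply: mact1.
Defined.

Definition mpow (R : pzRingType) (B : rmod R) (m : nat) : rmod R.
Proof.
refine (@RMod R ('I_m -> B)
  (fun f g => forall i, meq (f i) (g i))
  (fun _ => mzero)
  (fun f g i => madd (f i) (g i))
  (fun f i => mopp (f i))
  (fun f r i => mact (f i) r) _ _ _ _ _ _ _ _ _ _ _ _ _ _).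
- by move=> x i; apply: meq_refl.
- by move=> x y H i; apply: meq_sym.
- by move=> x y z H1 H2 i; apply: meq_trans (H1 i) (H2 i).
- by move=> x x' y y' H1 H2 i; apply: madd_compat.
- by move=> x x' H i; apply: mopp_compat.
- by move=> x x' r H i; apply: mact_compat.
- by move=> x y z i; apply: maddA.
- by move=> x y i; apply: maddC.
- by move=> x i; apply: madd0.
- by move=> x i; apply: maddN.
- by move=> x y r i; apply: mactDl.
- by move=> x r s i; apply: mactDr.
- by move=> x r s i; apply: mactM.
- by move=> x i; apply: mact1.
Defined.

Definition RR (R : pzRingType) : rmod R.
Proof.
refine (@RMod R R (fun x y => x = y) 0 +%R -%R *%R _ _ _ _ _ _ _ _ _ _ _ _ _ _).
all: try by move=> *; subst.
- by move=> x y z; apply: addrA.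
- by move=> x y; apply: addrC.
- by move=> x; apply: addr0.
- by move=> x; apply: subrr.
- by move=> x y r; apply: mulrDl.
- by move=> x r s; apply: mulrDr.
- by move=> x r s; apply: mulrA.
- by move=> x; apply: mulr1.
Defined.

Record rideal (R : pzRingType) := RIdeal {
  rid :> R -> Prop;
  rid0 : rid 0;
  ridD : forall x y, rid x -> rid y -> rid (x + y);
  ridN : forall x, rid x -> rid (- x);
  ridM : forall x r, rid x -> rid (x * r) }.

Definition ideal_mod (R : pzRingType) (I : rideal R) : rmod R.
Proof.
refine (@RMod R {x : R | I x} (fun u v => sval u = sval v)
  (exist _ 0 (rid0 I))
  (fun u v => exist _ (sval u + sval v) (ridD (proj2_sig u) (proj2_sig v)))
  (fun u => exist _ (- sval u) (ridN (proj2_sig u)))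
  (fun u r => exist _ (sval u * r) (ridM r (proj2_sig u))) _ _ _ _ _ _ _ _ _ _ _ _ _ _).
all: rewrite /=.
- by [].
- by move=> x y ->.
- by move=> x y z -> ->.
- by move=> x x' y y' /= -> ->.
- by move=> x x' /= ->.
- by move=> x x' r /= ->.
- by move=> [x ?] [y ?] [z ?] /=; rewrite addrA.
- by move=> [x ?] [y ?] /=; rewrite addrC.
- by move=> [x ?] /=; rewrite addr0.
- by move=> [x ?] /=; rewrite subrr.
- by move=> [x ?] [y ?] r /=; rewrite mulrDl.
- by move=> [x ?] r s /=; rewrite mulrDr.
- by move=> [x ?] r s /=; rewrite mulrA.
- by move=> [x ?] /=; rewrite mulr1.
Defined.

Definition quot_mod (R : pzRingType) (I : rideal R) : rmod R.
Proof.
refine (@RMod R R (fun x y => I (x - y)) 0 +%R -%R *%R _ _ _ _ _ _ _ _ _ _ _ _ _ _).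
- by move=> x; rewrite subrr; apply: rid0.
- by move=> x y H; rewrite -opprB; apply: ridN.
- by move=> x y z H1 H2; have := ridD H1 H2; rewrite addrA subrK.
- move=> x x' y y' H1 H2; have := ridD H1 H2.
  by rewrite opprD addrACA.
- by move=> x x' H; rewrite -opprD; apply: ridN.
- by move=> x x' r H; rewrite -mulrBl; apply: ridM.
- by move=> x y z; rewrite addrA subrr; apply: rid0.
- by move=> x y; rewrite (addrC x) subrr; apply: rid0.
- by move=> x; rewrite addr0 subrr; apply: rid0.
- by move=> x; rewrite subrr subrr; apply: rid0.
- by move=> x y r; rewrite mulrDl subrr; apply: rid0.
- by move=> x r s; rewrite mulrDr subrr; apply: rid0.
- by move=> x r s; rewrite mulrA subrr; apply: rid0.
- by move=> x; rewrite mulr1 subrr; apply: rid0.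
Defined.

Definition princ (R : pzRingType) (x : R) : rideal R.
Proof.
refine (@RIdeal R (fun y => exists t, y = x * t) _ _ _ _).
- by exists 0; rewrite mulr0.
- by move=> y z [t ->] [s ->]; exists (t + s); rewrite mulrDr.
- by move=> y [t ->]; exists (- t); rewrite mulrN.
- by move=> y r [t ->]; exists (t * r); rewrite mulrA.
Defined.

Definition rann (R : pzRingType) (a : R) : rideal R.
Proof.
refine (@RIdeal R (fun y => a * y = 0) _ _ _ _).
- by rewrite mulr0.
- by move=> y z Hy Hz; rewrite mulrDr Hy Hz addr0.
- by move=> y Hy; rewrite mulrN Hy oppr0.
- by move=> y r Hy; rewrite mulrA Hy mul0r.
Defined.

Definition propto (R : pzRingType) (A B : rmod R) : Prop :=
  exists m : nat, (0 < m)%N /\ exists C : rmod R, miso (dsum A C) (mpow B m).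

Definition fgproj (R : pzRingType) (A : rmod R) : Prop :=
  exists (n : nat) (C : rmod R), miso (dsum A C) (mpow (RR R) n).

Definition separative (R : pzRingType) : Prop :=
  forall A B : rmod R, fgproj A -> fgproj B ->
    miso (dsum A A) (dsum A B) -> miso (dsum A B) (dsum B B) -> miso A B.

Definition exchange_ring (R : pzRingType) : Prop :=
  forall x : R, exists e : R,
    [/\ e * e = e, (exists r, e = x * r) & (exists s, 1 - e = (1 - x) * s)].

Definition regular (R : pzRingType) (x : R) : Prop := exists y, x = x * y * x.

Definition unit_regular (R : unitRingType) (x : R) : Prop :=
  exists u, u \is a GRing.unit /\ x = x * u * x.

From HB Require Import structures.
From mathcomp Require Import all_boot all_algebra.
From Stdlib Require Import Setoid.
Import GRing.Theory.
Set Implicit Arguments. Unset Strict Implicit.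
Local Open Scope ring_scope.

(* Put b := a - a^3 and p := 1 - a^2, so that ap = pa = b and a^2 + p = 1.
   Regularity of b makes a regular (a (p y p + a) a = a when b y b = b), and
   splits pR in two ways, pR ~ bR (+) r(a) and pR ~ bR (+) R/aR.  Since a is
   regular, r(a) and R/aR are finitely generated projective, so in a
   separative ring bR cancels (it is proportional to both summands), giving
   R/aR ~ r(a); for a regular element this means a is unit-regular. *)

Section ModuleIsomorphisms.
Variable R : pzRingType.

Lemma is_hom_id (A : rmod R) : is_hom (fun x : A => x).
Proof. by split=> *; [ | apply: meq_refl | apply: meq_refl]. Qed.

Lemma is_hom_comp (A B C : rmod R) (f : A -> B) (g : B -> C) :
  is_hom f -> is_hom g -> is_hom (fun x => g (f x)).
Proof.
move=> [f1 f2 f3] [g1 g2 g3]; split.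
- by move=> x y H; apply: g1; apply: f1.
- by move=> x y; apply: meq_trans (g2 _ _); apply: g1.
- by move=> x r; apply: meq_trans (g3 _ _); apply: g1.
Qed.

Lemma miso_refl (A : rmod R) : miso A A.
Proof. by exists id, id; split; try apply: is_hom_id; move=> x; apply: meq_refl. Qed.

Lemma miso_sym (A B : rmod R) : miso A B -> miso B A.
Proof. by move=> [f [g [hf hg gf fg]]]; exists g, f; split. Qed.

Lemma miso_trans (A B C : rmod R) : miso A B -> miso B C -> miso A C.
Proof.
move=> [f [g [hf hg gf fg]]] [f' [g' [hf' hg' gf' fg']]].
exists (fun x => f' (f x)), (fun x => g (g' x)); split; try exact: is_hom_comp.
- by move=> x; apply: meq_trans (gf x); case: hg => g_compat _ _; apply: g_compat.
- by move=> x; apply: meq_trans (fg' x); case: hf' => f'_compat _ _; apply: f'_compat.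
Qed.

Lemma is_hom_pair (A B A' B' : rmod R) (f : A -> A') (g : B -> B') :
  is_hom f -> is_hom g -> is_hom (fun p : dsum A B => (f p.1, g p.2) : dsum A' B').
Proof.
move=> [f1 f2 f3] [g1 g2 g3]; split.
- by move=> x y [H1 H2]; split; [apply: f1 | apply: g1].
- by move=> x y; split; [apply: f2 | apply: g2].
- by move=> x r; split; [apply: f3 | apply: g3].
Qed.

Lemma dsum_congr (A A' B B' : rmod R) :
  miso A A' -> miso B B' -> miso (dsum A B) (dsum A' B').
Proof.
move=> [f [g [hf hg gf fg]]] [f' [g' [hf' hg' gf' fg']]].
exists (fun p : dsum A B => (f p.1, f' p.2) : dsum A' B').
exists (fun p : dsum A' B' => (g p.1, g' p.2) : dsum A B).
by split; try exact: is_hom_pair; split; [apply: gf | apply: gf' | apply: fg | apply: fg'].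
Qed.

Lemma dsumC (A B : rmod R) : miso (dsum A B) (dsum B A).
Proof.
exists (fun p : dsum A B => (p.2, p.1) : dsum B A).
exists (fun p : dsum B A => (p.2, p.1) : dsum A B); split.
- by split=> [x y [? ?]|x y|x r]; split=> //=; apply: meq_refl.
- by split=> [x y [? ?]|x y|x r]; split=> //=; apply: meq_refl.
- by move=> x; split; apply: meq_refl.
- by move=> x; split; apply: meq_refl.
Qed.

Lemma dsumA (A B C : rmod R) : miso (dsum A (dsum B C)) (dsum (dsum A B) C).
Proof.
exists (fun p : dsum A (dsum B C) => ((p.1, p.2.1), p.2.2) : dsum (dsum A B) C).
exists (fun p : dsum (dsum A B) C => (p.1.1, (p.1.2, p.2)) : dsum A (dsum B C)); split.
- by split=> [x y [? [? ?]]|x y|x r]; (repeat split) => //=; apply: meq_refl.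
- by split=> [x y [[? ?] ?]|x y|x r]; (repeat split) => //=; apply: meq_refl.
- by move=> x; (repeat split); apply: meq_refl.
- by move=> x; (repeat split); apply: meq_refl.
Qed.

Lemma dsum_mpow0 (A B : rmod R) : miso (dsum A (mpow B 0)) A.
Proof.
exists (fun p : dsum A (mpow B 0) => p.1).
exists (fun x : A => (x, fun _ => mzero) : dsum A (mpow B 0)); split.
- by split=> [x y [? ?]|x y|x r] //=; apply: meq_refl.
- by split=> [x y ?|x y|x r]; split=> //=; try apply: meq_refl; case.
- by move=> x; split; [apply: meq_refl | case].
- by move=> x; apply: meq_refl.
Qed.

Lemma mpowD (A : rmod R) m n : miso (mpow A (m + n)) (dsum (mpow A m) (mpow A n)).
Proof.
exists (fun g : mpow A (m + n) =>
  ((fun i : 'I_m => g (lshift n i)), (fun j : 'I_n => g (rshift m j)))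
    : dsum (mpow A m) (mpow A n)).
exists (fun p : dsum (mpow A m) (mpow A n) =>
  (fun k : 'I_(m + n) => match split k with inl i => p.1 i | inr j => p.2 j end)
    : mpow A (m + n)); split.
- by split=> [x y H|x y|x r]; split=> /= i; try apply: meq_refl; apply: H.
- split=> [x y [H1 H2]|x y|x r] /= k; case: (split k) => i //=; try apply: meq_refl;
    by [apply: H1 | apply: H2].
- move=> x k /=; case E: (split k) => [i|j];
    by have := splitK k; rewrite E /= => <-; apply: meq_refl.
- by move=> x; split=> /= i; [rewrite (unsplitK (inl _ i)) | rewrite (unsplitK (inr _ i))];
    apply: meq_refl.
Qed.

Lemma mpow1 (A : rmod R) : miso (mpow A 1) A.
Proof.
exists (fun g : mpow A 1 => g ord0).
exists (fun x : A => (fun _ => x) : mpow A 1); split.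
- by split=> [x y H|x y|x r] //=; apply: meq_refl.
- by split=> [x y H|x y|x r] /= i //; apply: meq_refl.
- by move=> x i /=; rewrite (ord1 i); apply: meq_refl.
- by move=> x; apply: meq_refl.
Qed.

End ModuleIsomorphisms.

Add Parametric Relation (R : pzRingType) : (rmod R) (@miso R)
  reflexivity proved by (@miso_refl R)
  symmetry proved by (@miso_sym R)
  transitivity proved by (@miso_trans R) as miso_rel.

Add Parametric Morphism (R : pzRingType) : (@dsum R)
  with signature (@miso R) ==> (@miso R) ==> (@miso R) as dsum_mor.
Proof. by move=> *; apply: dsum_congr. Qed.

#[local] Hint Resolve miso_refl : core.

Lemma mpowS (R : pzRingType) (A : rmod R) n : miso (mpow A n.+1) (dsum A (mpow A n)).
Proof. by have := mpowD A 1 n; rewrite mpow1. Qed.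

Section SeparativeCancellation.
Variable R : pzRingType.
Implicit Types A B C X Y : rmod R.

Definition summand X Y := exists V, miso Y (dsum X V).

Lemma summand_trans X Y Z : summand X Y -> summand Y Z -> summand X Z.
Proof. by move=> [V HV] [W HW]; exists (dsum V W); rewrite HW HV dsumA. Qed.

Lemma summand_dsumr X V : summand X (dsum V X).
Proof. by exists V; apply: dsumC. Qed.

Lemma summand_mpow X n : summand X (mpow X n.+1).
Proof. by exists (mpow X n); apply: mpowS. Qed.

Lemma fgproj_miso A B : miso A B -> fgproj A -> fgproj B.
Proof. by move=> AB [n [C HC]]; exists n, C; rewrite -AB. Qed.

Lemma fgproj_dsum A B : fgproj A -> fgproj B -> fgproj (dsum A B).
Proof.
move=> [n [C HC]] [m [D HD]]; exists (n + m)%N, (dsum C D).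
by rewrite mpowD -HC -HD !dsumA -(dsumA A B C) (dsumC B C) !dsumA.
Qed.

Lemma fgproj_mpow A n : fgproj A -> fgproj (mpow A n).
Proof.
move=> PA; elim: n => [|n IH].
- by exists 0%N, (mpow (RR R) 0); rewrite dsumC dsum_mpow0.
- by apply: fgproj_miso (miso_sym (mpowS A n)) _; apply: fgproj_dsum.
Qed.

Hypothesis sepR : separative R.

Lemma separative_cancel_summand X Y C : fgproj X -> fgproj Y ->
  miso (dsum X C) (dsum Y C) -> summand C X -> summand C Y -> miso X Y.
Proof.
move=> PX PY XY [X' HX] [Y' HY]; apply: sepR => //.
- by rewrite {2}HX dsumA XY -dsumA -HX dsumC.
- by rewrite {3}HY dsumA -XY -dsumA -HY.
Qed.

Lemma separative_cancel_mpow A B n : fgproj A -> fgproj B ->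
  miso (dsum A (mpow A n.+1)) (dsum B (mpow A n.+1)) -> miso (dsum A A) (dsum B A).
Proof.
move=> PA PB; elim: n => [|n IH]; first by rewrite mpow1.
move=> AB; apply: IH; apply: (@separative_cancel_summand _ _ A).
- by apply: fgproj_dsum => //; apply: fgproj_mpow.
- by apply: fgproj_dsum => //; apply: fgproj_mpow.
- by rewrite -!dsumA (dsumC (mpow A n.+1) A) -mpowS.
- by exists (mpow A n.+1).
- exact: summand_trans (summand_mpow A n) (summand_dsumr _ _).
Qed.

Lemma dsum_mpow_of_propto A B C : miso (dsum C A) (dsum C B) -> propto C A ->
  exists n, miso (dsum A (mpow A n.+1)) (dsum B (mpow A n.+1)).
Proof.
move=> CAB [[|n] [// _ [D HD]]]; exists n.
by rewrite -HD !dsumA (dsumC A C) CAB (dsumC C B).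
Qed.

Lemma separative_cancel_propto A B C : fgproj A -> fgproj B ->
  miso (dsum C A) (dsum C B) -> propto C A -> propto C B -> miso A B.
Proof.
move=> PA PB CAB /(dsum_mpow_of_propto CAB) [n AB].
move=> /(dsum_mpow_of_propto (miso_sym CAB)) [m BA]; apply: sepR => //.
- by rewrite (separative_cancel_mpow PA PB AB) dsumC.
- by symmetry; apply: separative_cancel_mpow BA.
Qed.

End SeparativeCancellation.

Ltac expand_mul :=
  rewrite ?(mulrDr, mulrDl, mulrBr, mulrBl, mul1r, mulr1, mulrA, mulr0, mul0r, mulrN, mulNr).

Section RegularElement.
Variables (R : pzRingType) (a z : R).
Hypothesis aza : a * z * a = a.

Lemma mulr_aza (x : R) : x * a * z * a = x * a.
Proof. by rewrite -!mulrA (mulrA a) aza. Qed.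

Lemma mulr_1Baz_princ (t : R) : (1 - a * z) * (a * t) = 0.
Proof. by rewrite mulrBl mul1r mulrA aza subrr. Qed.

Lemma rann_1Bza (x : R) : a * ((1 - z * a) * x) = 0.
Proof. by expand_mul; rewrite aza subrr. Qed.

Lemma fgproj_quot_princ : fgproj (quot_mod (princ a)).
Proof.
exists 1%N, (ideal_mod (princ a)); rewrite mpow1.
have az_princ (x : R) : princ a (a * z * x) by exists (z * x); rewrite mulrA.
pose f (q : dsum (quot_mod (princ a)) (ideal_mod (princ a))) : RR R :=
  (1 - a * z) * q.1 + sval q.2.
pose g (x : RR R) : dsum (quot_mod (princ a)) (ideal_mod (princ a)) :=
  (x, exist _ (a * z * x) (az_princ x)).
exists f, g; split.
- split=> [[q [w ?]] [q' [w' ?]] [/= [t qq'] /= ww']|x x'|x r]; rewrite /f /=.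
  + by rewrite ww' -(subrK q' q) qq' mulrDr mulr_1Baz_princ add0r.
  + by rewrite mulrDr addrACA.
  + by rewrite [RHS]mulrDl mulrA.
- by split=> [x x' /= ->|x x'|x r]; split=> //=; do ?[exists 0; rewrite subrr mulr0];
    rewrite ?mulrDr ?mulrA.
- move=> [q [w [t wE]]]; subst w; rewrite /f /g; split=> /=.
  + by exists (t - z * q); expand_mul; rewrite addrAC (addrAC q) subrr add0r addrC.
  + by expand_mul; rewrite !aza subrr add0r.
- by move=> x; rewrite /f /g /= mulrBl mul1r subrK.
Qed.

Lemma fgproj_rann : fgproj (ideal_mod (rann a)).
Proof.
exists 1%N, (ideal_mod (princ (z * a))); rewrite mpow1.
have za_princ (x : R) : princ (z * a) (z * a * x) by exists x.
pose f (q : dsum (ideal_mod (rann a)) (ideal_mod (princ (z * a)))) : RR R :=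
  sval q.1 + sval q.2.
pose g (x : RR R) : dsum (ideal_mod (rann a)) (ideal_mod (princ (z * a))) :=
  (exist _ ((1 - z * a) * x) (rann_1Bza x), exist _ (z * a * x) (za_princ x)).
exists f, g; split.
- split=> [[[k ?] [w ?]] [[k' ?] [w' ?]] [/= kk' ww']|x x'|x r]; rewrite /f /=.
  + by rewrite kk' ww'.
  + by rewrite addrACA.
  + by rewrite mulrDl.
- by split=> [x x' /= ->|x x'|x r]; split=> //=; rewrite ?mulrDr ?mulrA.
- move=> [[k ak0] [w [t wE]]]; subst w; rewrite /f /g; split=> /=.
  + rewrite mulrBl mul1r mulrDr -(mulrA z a k) ak0 mulr0 add0r !mulrA.
    by rewrite mulr_aza addrK.
  + by rewrite mulrDr -(mulrA z a k) ak0 mulr0 add0r !mulrA mulr_aza.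
- by move=> x; rewrite /f /g /= mulrBl mul1r subrK.
Qed.

End RegularElement.

Lemma mulrA_eq (R : pzRingType) (u v w : R) : u * v = w -> forall x, x * u * v = x * w.
Proof. by move=> uvw x; rewrite -mulrA uvw. Qed.

Section TwoDecompositions.
Variables (R : pzRingType) (a p b y : R).
Hypotheses (apE : a * p = b) (paE : p * a = b) (aap : a * a + p = 1) (byb : b * y * b = b).

Lemma pE : p = 1 - a * a.
Proof. by rewrite -aap addrAC subrr add0r. Qed.

Lemma mulp_rann (k : R) : a * k = 0 -> p * k = k.
Proof. by move=> ak0; rewrite pE mulrBl mul1r -mulrA ak0 mulr0 subr0. Qed.

Lemma princ_miso_dsum_rann :
  miso (ideal_mod (princ p)) (dsum (ideal_mod (princ b)) (ideal_mod (rann a))).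
Proof.
have a_princ x : princ p x -> princ b (a * x) by move=> [t ->]; exists t; rewrite mulrA apE.
have rann_part x : princ p x -> rann a (x - p * y * (a * x)).
  by move=> [t ->] /=; expand_mul; rewrite !apE !(mulrA_eq apE) byb subrr.
have p_part w k : rann a k -> princ p (p * y * w + k).
  by move=> ak0; exists (y * w + k); rewrite mulrDr mulrA (mulp_rann ak0).
pose f (x : ideal_mod (princ p)) : dsum (ideal_mod (princ b)) (ideal_mod (rann a)) :=
  (exist _ (a * sval x) (a_princ _ (proj2_sig x)),
   exist _ (sval x - p * y * (a * sval x)) (rann_part _ (proj2_sig x))).
pose g (q : dsum (ideal_mod (princ b)) (ideal_mod (rann a))) : ideal_mod (princ p) :=
  exist _ (p * y * sval q.1 + sval q.2) (p_part (sval q.1) _ (proj2_sig q.2)).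
have a_g (t k : R) : a * k = 0 -> a * (p * y * (b * t) + k) = b * t.
  by move=> ak0; expand_mul; rewrite apE byb ak0 addr0.
exists f, g; split.
- split=> [x x' /= ->|x x'|x r]; split=> //=.
  + by rewrite mulrDr.
  + by rewrite !mulrDr opprD addrACA.
  + by rewrite mulrA.
  + by rewrite mulrBl !mulrA.
- split=> [[x1 x2] [x1' x2'] [/= -> ->]|x x'|x r] //=.
  + by rewrite mulrDr addrACA.
  + by rewrite mulrDl mulrA.
- by move=> x /=; rewrite addrC subrK.
- move=> [[w [t wE]] [k ak0]]; subst w; split=> /=.
  + exact: a_g.
  + by rewrite a_g // (addrC _ k) addrK.
Qed.

Lemma princ_miso_dsum_quot :
  miso (ideal_mod (princ p)) (dsum (ideal_mod (princ b)) (quot_mod (princ a))).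
Proof.
have by_princ x : princ b (b * y * x) by exists (y * x); rewrite mulrA.
have p_part w r : princ b w -> princ p (w + (1 - b * y) * (p * r)).
  move=> [t ->]; exists (a * t + r - a * y * (p * r)).
  by expand_mul; rewrite !paE addrA.
pose f (x : ideal_mod (princ p)) : dsum (ideal_mod (princ b)) (quot_mod (princ a)) :=
  (exist _ (b * y * sval x) (by_princ (sval x)), sval x).
pose g (q : dsum (ideal_mod (princ b)) (quot_mod (princ a))) : ideal_mod (princ p) :=
  exist _ (sval q.1 + (1 - b * y) * (p * q.2)) (p_part _ q.2 (proj2_sig q.1)).
have by_b x : (1 - b * y) * (b * x) = 0 by rewrite mulrBl mul1r !mulrA byb subrr.
have g_princ t : (1 - b * y) * (p * (a * t)) = 0 by rewrite mulrA paE by_b.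
exists f, g; split.
- split=> [x x' /= ->|x x'|x r]; split=> //=; try by exists 0; rewrite subrr mulr0.
  + by rewrite mulrDr.
  + by rewrite mulrA.
- split=> [[x1 x2] [x1' x2'] [/= -> [t x2E]]|x x'|x r] //=.
  + by rewrite -(subrK x2' x2) x2E !mulrDr g_princ add0r.
  + by rewrite (mulrDr p) mulrDr addrACA.
  + by rewrite [RHS]mulrDl -!mulrA.
- move=> [x [t xE]] /=; subst x.
  have ab_ba : a * b = b * a by rewrite -{1}paE mulrA apE.
  have pp : p * (p * t) = p * t - b * (a * t).
    by rewrite {1}pE mulrBl mul1r -mulrA (mulrA a p) apE (mulrA a b) ab_ba -mulrA.
  by rewrite pp mulrBr by_b subr0 mulrBl mul1r addrC subrK.
- move=> [[w [t wE]] r]; subst w; split=> /=.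
  + by expand_mul; rewrite !byb subrr addr0.
  + exists (p * t - a * r - p * y * (p * r)).
    have pr : p * r = r - a * a * r by rewrite pE mulrBl mul1r.
    expand_mul; rewrite !apE pr.
    by rewrite addrAC -addrA (addrA (-r)) addKr addrA.
Qed.

End TwoDecompositions.

Section UnitRegularity.
Variables (R : unitRingType) (a z : R).
Hypothesis aza : a * z * a = a.

(* s and t are mutually inverse maps between (1 - az)R ~ R/aR and
   (1 - za)R = r(a); adding s to the inner inverse zaz of a yields a unit. *)
Lemma unit_regular_of_annihilators (s t w : R) :
  a * s = 0 -> s * a = 0 -> t * s = 1 + a * w -> s * t = 1 - z * a -> unit_regular a.
Proof.
move=> as0 sa0 tsE stE.
set u := z * a * z + s; set v := a + (1 - a * z) * t * (1 - z * a).
have zaz_az' : z * a * z * (1 - a * z) = 0 by rewrite mulrBr mulr1 !mulrA (mulr_aza aza) subrr.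
have s_az' : s * (1 - a * z) = s by rewrite mulrBr mulr1 mulrA sa0 mul0r subr0.
have za'_zaz : (1 - z * a) * (z * a * z) = 0 by rewrite mulrBl mul1r !mulrA (mulr_aza aza) subrr.
have za'_s : (1 - z * a) * s = s by rewrite mulrBl mul1r -mulrA as0 mulr0 subr0.
have za'_idem : (1 - z * a) * (1 - z * a) = 1 - z * a.
  by rewrite mulrBr mulr1 mulrBl mul1r !mulrA (mulr_aza aza) subrr subr0.
have az'_ts : (1 - a * z) * (t * s) = 1 - a * z.
  by rewrite tsE mulrDr mulr1 (mulr_1Baz_princ aza) addr0.
have uv1 : u * v = 1.
  rewrite /u /v mulrDl (mulrDr (z * a * z)) (mulrDr s) !mulrA zaz_az' !mul0r addr0.
  by rewrite (mulr_aza aza) sa0 add0r s_az' stE za'_idem addrC subrK.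
have vu1 : v * u = 1.
  rewrite /u /v mulrDl (mulrDr a) as0 addr0 -(mulrA _ (1 - z * a)) mulrDr.
  rewrite za'_zaz za'_s add0r -(mulrA _ t s) az'_ts !mulrA aza.
  by rewrite addrC subrK.
exists u; split; first by apply/unitrP; exists v.
by rewrite /u mulrDr mulrDl !mulrA !(mulr_aza aza) aza -(mulrA a s) sa0 mulr0 addr0.
Qed.

Lemma unit_regular_of_quot_miso_rann :
  miso (quot_mod (princ a)) (ideal_mod (rann a)) -> unit_regular a.
Proof.
move=> [phi [psi [[phi_compat _ phiM] [psi_compat _ psiM] psi_phi phi_psi]]].
set s := sval (phi 1).
have phiE r : sval (phi r) = s * r by have := phiM 1 r; rewrite /= mul1r.
have as0 : a * s = 0 := proj2_sig (phi 1).
have sa0 : s * a = 0.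
  have a0 : meq (a : quot_mod (princ a)) 0 by exists 1; rewrite subr0 mulr1.
  by rewrite -phiE (phi_compat _ _ a0) phiE mulr0.
have k1_rann : rann a (1 - z * a) by rewrite /= mulrBr mulr1 mulrA aza subrr.
pose k1 : ideal_mod (rann a) := exist _ (1 - z * a) k1_rann.
set t := psi k1.
have psiE (k : ideal_mod (rann a)) : exists w, psi k - t * sval k = a * w.
  have kE : meq k (mact k1 (sval k)).
    by case: k => k ak0 /=; rewrite mulrBl mul1r -mulrA ak0 mulr0 subr0.
  by have [w wE] := meq_trans (psi_compat _ _ kE) (psiM k1 (sval k)); exists w.
have [w0 w0E] : exists w, psi (phi 1) - 1 = a * w := psi_phi 1.
have [w1 w1E] := psiE (phi 1).
apply: (@unit_regular_of_annihilators s t (w0 - w1)) => //.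
- by rewrite mulrBr -w0E -w1E opprB addrA (addrC 1) subrK addrC subrK.
- by rewrite -phiE; apply: phi_psi.
Qed.

End UnitRegularity.

Unset Implicit Arguments.

Theorem lemma2p4 (R : unitRingType) (a : R) :
  exchange_ring R -> separative R -> (2%:R : R) \is a GRing.unit ->
  regular (a - a ^+ 3) ->
  propto (ideal_mod (princ (a - a ^+ 3))) (ideal_mod (rann a)) ->
  propto (ideal_mod (princ (a - a ^+ 3))) (quot_mod (princ a)) ->
  unit_regular a.
Proof.
move=> _ sepR _ [y /esym byb] bK bQ.
set b := a - a ^+ 3 in byb bK bQ; set p := 1 - a * a.
have a3E : a ^+ 3 = a * a * a by rewrite !exprS expr0 mulr1 mulrA.
have apE : a * p = b by rewrite /b a3E mulrBr mulr1 mulrA.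
have paE : p * a = b by rewrite /b a3E mulrBl mul1r.
have aap : a * a + p = 1 by rewrite addrC subrK.
have aza : a * (p * y * p + a) * a = a.
  by rewrite mulrDr mulrDl !mulrA apE (mulrA_eq paE) byb /b a3E subrK.
apply: (unit_regular_of_quot_miso_rann aza).
apply: separative_cancel_propto (fgproj_quot_princ aza) (fgproj_rann aza) _ bQ bK => //.
by rewrite -(princ_miso_dsum_quot apE paE aap byb) (princ_miso_dsum_rann apE aap byb).
Qed.
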